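(* Let $k=0$ and $f_r(x)=x^2\exp(r-x)$. For every $r\in[2.6,2.9]$, \[ f_r^2(2)<f_r^3(2)<2<f_r(2), \] and, in consequence, $f_r$ (as a self-map of the compact interval $[f_r^2(2),f_r(2)]$) is chaotic in the sense of Li and Yorke, in the sense of Block and Coppel, and in the sense of Devaney.
   Context: Let $X$ be a compact metric space and $f\colon X\to X$ continuous. (Li–Yorke) $f$ is L/Y-chaotic if there is an uncountable $S\subset X$ such that for all $x\neq y$ in $S$: $\limsup_n d(f^n x,f^n y)>0$ and $\liminf_n d(f^n x,f^n y)=0$, and for all $x\in S$ and all periodic $p\in X$: $\limsup_n d(f^n x,f^n p)>0$. (Block–Coppel) $f$ is B/C-chaotic if there are $m\in\mathbb{N}$, a compact $f^m$-invariant $Y\subset X$ and a continuous surjection $h\colon Y\to\Sigma$ with $h\circ f^m=\sigma\circ h$ on $Y$, where $\Sigma=\{0,1\}^{\mathbb{N}}$ with metric $d(\alpha,\beta)=\sum_{i\ge0}|a_i-b_i|/2^i$ and $\sigma$ is the left shift. (Devaney) $f$ is D-chaotic if there is a compact invariant $Y\subset X$ such that $f|_Y$ is topologically transitive, periodic points of $f|_Y$ are dense in $Y$, and $f|_Y$ has sensitive dependence on initial conditions. *)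

From Stdlib Require Import Reals.
From Coquelicot Require Import Coquelicot.
Open Scope R_scope.

Definition fr (r x : R) : R := x ^ 2 * exp (r - x).

Definition iter (f : R -> R) (n : nat) (x : R) : R := Nat.iter n f x.

Definition uncountable (S : R -> Prop) : Prop :=
  ~ exists g : R -> nat, forall x y, S x -> S y -> g x = g y -> x = y.

Definition periodic_pt (f : R -> R) (p : R) : Prop :=
  exists m : nat, (1 <= m)%nat /\ iter f m p = p.

Definition LY_chaotic (f : R -> R) (X : R -> Prop) : Prop :=
  exists S : R -> Prop,
    (forall x, S x -> X x) /\ uncountable S /\
    (forall x y, S x -> S y -> x <> y ->
        Rbar_lt 0 (LimSup_seq (fun n => Rabs (iter f n x - iter f n y))) /\
        LimInf_seq (fun n => Rabs (iter f n x - iter f n y)) = Finite 0) /\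
    (forall x p, S x -> X p -> periodic_pt f p ->
        Rbar_lt 0 (LimSup_seq (fun n => Rabs (iter f n x - iter f n p)))).

Definition Sigma := nat -> bool.
Definition bitdiff (a b : bool) : R := if Bool.eqb a b then 0 else 1.
Definition dSigma (a b : Sigma) : R :=
  Series (fun i => bitdiff (a i) (b i) / 2 ^ i).
Definition shift (a : Sigma) : Sigma := fun i => a (S i).

Definition BC_chaotic (f : R -> R) (X : R -> Prop) : Prop :=
  exists (m : nat) (Y : R -> Prop) (h : R -> Sigma),
    (1 <= m)%nat /\
    (forall y, Y y -> X y) /\ compact Y /\
    (forall y, Y y -> Y (iter f m y)) /\
    (forall y, Y y -> forall eps, 0 < eps -> exists delta, 0 < delta /\
        forall z, Y z -> Rabs (z - y) < delta -> dSigma (h z) (h y) < eps) /\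
    (forall a : Sigma, exists y, Y y /\ h y = a) /\
    (forall y, Y y -> h (iter f m y) = shift (h y)).

Definition D_chaotic (f : R -> R) (X : R -> Prop) : Prop :=
  exists Y : R -> Prop,
    (exists y, Y y) /\
    (forall y, Y y -> X y) /\ compact Y /\
    (forall y, Y y -> Y (f y)) /\
    (* topological transitivity of f|Y (basic open sets = relative balls) *)
    (forall x y eps, Y x -> Y y -> 0 < eps ->
        exists z n, Y z /\ (1 <= n)%nat /\ Rabs (z - x) < eps /\
                    Rabs (iter f n z - y) < eps) /\
    (forall x eps, Y x -> 0 < eps ->
        exists p, Y p /\ periodic_pt f p /\ Rabs (p - x) < eps) /\
    (exists delta, 0 < delta /\ forall x eps, Y x -> 0 < eps ->
        exists y n, Y y /\ Rabs (y - x) < eps /\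
                    delta < Rabs (iter f n x - iter f n y)).

(* For r in [2.6, 2.9] the second iterate g = f_r o f_r has a horseshoe: disjoint intervals
   I0 = [a0, b0] and I1 = [a1, b1] inside [f_r^2(2), f_r(2)], each mapped by g onto a superset
   of [a0, b1], on which |g'| >= 11/10.  The points whose g-orbit stays in I0 u I1 form a
   compact set Lambda, and expansion makes the itinerary map a homeomorphism of Lambda onto the
   full 2-shift conjugating g to the shift: this is Block-Coppel chaos.  Devaney chaos holds on
   Lambda u f_r(Lambda), and the points of Lambda whose itineraries interleave ever longer runs
   of zeros with an arbitrary sequence form a Li-Yorke scrambled set.  The inequalities behind
   the horseshoe are checked by rational interval arithmetic on five subintervals of r. *)

From Stdlib Require Import Reals QArith Qreals Qround Qminmax ZArith Lra Lia.
From Stdlib Require Import ClassicalEpsilon FunctionalExtensionality Classical.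
From Coquelicot Require Import Coquelicot.
Open Scope R_scope.

(** * Iterates, limits and closed sets *)

Lemma iter_add (f : R -> R) n m x : iter f (n + m) x = iter f n (iter f m x).
Proof.
  induction n as [|n IH]; [reflexivity|]. unfold iter in *. simpl. now rewrite IH.
Qed.

Lemma iter_succ_r (f : R -> R) n x : iter f (S n) x = iter f n (f x).
Proof. replace (S n) with (n + 1)%nat by lia. now rewrite iter_add. Qed.

Lemma iter_mul (f : R -> R) m n x : iter f (m * n) x = iter (iter f m) n x.
Proof.
  induction n as [|n IH]; [now rewrite Nat.mul_0_r|].
  replace (m * S n)%nat with (m + m * n)%nat by lia. rewrite iter_add, IH. reflexivity.
Qed.

Lemma iter_comm (f : R -> R) n i x : iter f n (iter f i x) = iter f i (iter f n x).
Proof. now rewrite <- !iter_add, Nat.add_comm. Qed.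

Lemma continuity_iter (f : R -> R) : continuity f -> forall n, continuity (iter f n).
Proof.
  intros Hf n. induction n as [|n IH]; intro x.
  - apply continuity_pt_id.
  - apply (continuity_pt_comp (iter f n) f x); auto.
Qed.

Lemma continuity_pt_eps (h : R -> R) x : continuity_pt h x -> forall eps, 0 < eps ->
  exists delta, 0 < delta /\ forall z, Rabs (z - x) < delta -> Rabs (h z - h x) < eps.
Proof.
  intros Hc eps He. destruct (Hc eps He) as [d [Hd H]].
  exists d. split; auto. intros z Hz. destruct (Req_dec z x) as [->|Hne].
  - rewrite Rminus_diag, Rabs_R0. auto.
  - apply (H z). split; [split; [exact I|auto]|exact Hz].
Qed.

Lemma small_of_pow_mul_le lam D eps : 1 < lam -> 0 < eps ->
  exists N, forall d, lam ^ N * d <= D -> d < eps.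
Proof.
  intros Hlam He.
  destruct (Pow_x_infinity lam ltac:(rewrite Rabs_pos_eq; lra) (D / eps + 1)) as [N HN].
  exists N. intros d Hd. specialize (HN N (le_n N)).
  rewrite Rabs_pos_eq in HN by (apply pow_le; lra).
  destruct (Rlt_dec d eps) as [|K]; auto. exfalso.
  assert (D / eps * eps = D) by (field; lra).
  assert (lam ^ N * eps <= lam ^ N * d) by (apply Rmult_le_compat_l; [apply pow_le|]; lra).
  assert (D / eps * eps < lam ^ N * eps) by (apply Rmult_lt_compat_r; lra).
  lra.
Qed.

Lemma LimSup_seq_pos (u : nat -> R) c : 0 < c ->
  (forall N, exists n, (N <= n)%nat /\ c <= u n) -> Rbar_lt 0 (LimSup_seq u).
Proof.
  intros Hc H. destruct (ex_LimSup_seq u) as [l Hl].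
  rewrite (is_LimSup_seq_unique u l Hl).
  destruct l as [l| |]; simpl in *; auto.
  - destruct (Rlt_dec 0 l) as [|Hn]; auto. exfalso.
    destruct (Hl (mkposreal (c / 2) ltac:(lra))) as [_ [N HN]].
    destruct (H N) as [n [Hn1 Hn2]]. specialize (HN n Hn1). simpl in HN. lra.
  - destruct (Hl 0) as [N HN]. destruct (H N) as [n [Hn1 Hn2]]. specialize (HN n Hn1). lra.
Qed.

Lemma LimInf_seq_zero (u : nat -> R) : (forall n, 0 <= u n) ->
  (forall eps, 0 < eps -> forall N, exists n, (N <= n)%nat /\ u n < eps) ->
  LimInf_seq u = Finite 0.
Proof.
  intros H0 H. apply is_LimInf_seq_unique. simpl. intros eps. split.
  - intros N. destruct (H eps (cond_pos eps) N) as [n [Hn1 Hn2]]. exists n. split; auto. lra.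
  - exists O. intros n _. pose proof (H0 n). pose proof (cond_pos eps). lra.
Qed.

Lemma Un_cv_succ (u : nat -> R) l : Un_cv u l -> Un_cv (fun n => u (S n)) l.
Proof. intros H eps He. destruct (H eps He) as [N HN]. exists N. intros n Hn. apply HN. lia. Qed.

Lemma Un_cv_interval (u : nat -> R) l c d : Un_cv u l -> (forall n, c <= u n <= d) -> c <= l <= d.
Proof.
  intros H B.
  assert (Hc : forall a, Un_cv (fun _ => a) a).
  { intros a eps He. exists O. intros. unfold R_dist. now rewrite Rminus_diag, Rabs_R0. }
  split.
  - apply (@Rle_cv_lim (fun _ => c) u c l); auto. intro n; apply B.
  - apply (@Rle_cv_lim u (fun _ => d) l d); auto. intro n; apply B.
Qed.

Lemma mean_value (g g' : R -> R) x y : x <= y ->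
  (forall c, x <= c <= y -> derivable_pt_lim g c (g' c)) ->
  exists c, x <= c <= y /\ g y - g x = g' c * (y - x).
Proof.
  intros Hxy Hg. destruct (Req_dec x y) as [<-|Hne].
  - exists x. split; [lra|ring].
  - destruct (MVT_cor2 g g' x y) as [c [Hc1 Hc2]]; [lra|intros; apply Hg; lra|].
    exists c. split; [lra|]. rewrite Hc1. ring.
Qed.

Lemma closed_set_of_eps (P : R -> Prop) :
  (forall x, ~ P x -> exists delta, 0 < delta /\ forall z, Rabs (z - x) < delta -> ~ P z) ->
  closed_set P.
Proof.
  intros H x Hx. destruct (H x Hx) as [d [Hd Hz]].
  exists (mkposreal d Hd). intros z Hzd. apply Hz. exact Hzd.
Qed.

Lemma eps_of_closed_set (P : R -> Prop) : closed_set P ->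
  forall x, ~ P x -> exists delta, 0 < delta /\ forall z, Rabs (z - x) < delta -> ~ P z.
Proof.
  intros H x Hx. destruct (H x Hx) as [d Hd].
  exists d. split; [apply cond_pos|]. intros z Hz. apply Hd. exact Hz.
Qed.

Lemma closed_set_union (P Q : R -> Prop) : closed_set P -> closed_set Q ->
  closed_set (fun x => P x \/ Q x).
Proof.
  intros HP HQ. apply closed_set_of_eps. intros x Hx.
  destruct (eps_of_closed_set P HP x) as [d1 [Hd1 H1]]; [tauto|].
  destruct (eps_of_closed_set Q HQ x) as [d2 [Hd2 H2]]; [tauto|].
  exists (Rmin d1 d2). split; [now apply Rmin_pos|].
  intros z Hz [Hp|Hq].
  - apply (H1 z); auto. eapply Rlt_le_trans; [exact Hz|apply Rmin_l].
  - apply (H2 z); auto. eapply Rlt_le_trans; [exact Hz|apply Rmin_r].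
Qed.

Lemma closed_set_interval c d : closed_set (fun x => c <= x <= d).
Proof.
  apply closed_set_of_eps. intros y Hy. destruct (Rlt_dec y c).
  - exists (c - y). split; [lra|]. intros z Hz Hzc. apply Rabs_def2 in Hz. lra.
  - exists (y - d). split; [lra|]. intros z Hz Hzc. apply Rabs_def2 in Hz. lra.
Qed.

Lemma closed_set_ext (P Q : R -> Prop) : (forall x, P x <-> Q x) -> closed_set P -> closed_set Q.
Proof.
  intros E H. apply closed_set_of_eps. intros x Hx.
  destruct (eps_of_closed_set P H x) as [d [Hd K]]; [now rewrite E|].
  exists d. split; auto. intros z Hz. rewrite <- E. now apply K.
Qed.

Lemma closed_set_finite_union (P : nat -> R -> Prop) n : (forall i, closed_set (P i)) ->
  closed_set (fun x => exists i, (i < n)%nat /\ P i x).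
Proof.
  intros H. induction n as [|n IH].
  - apply closed_set_of_eps. intros x _. exists 1. split; [lra|]. intros z _ [i [Hi _]]. lia.
  - apply (closed_set_ext (fun x => (exists i, (i < n)%nat /\ P i x) \/ P n x)).
    + intros x. split.
      * intros [[i [Hi Hx]]|Hx]; [exists i|exists n]; split; auto; lia.
      * intros [i [Hi Hx]]. destruct (Nat.eq_dec i n) as [->|Hne]; [now right|].
        left; exists i; split; auto; lia.
    + now apply closed_set_union.
Qed.

(** * The Cantor space and a scrambling code *)

Lemma bitdiff_bounds a b : 0 <= bitdiff a b <= 1.
Proof. destruct a, b; unfold bitdiff; simpl; lra. Qed.

Lemma dSigma_le_of_agree (a b : Sigma) N :
  (forall k, (k < N)%nat -> a k = b k) -> 2 ^ N * dSigma a b <= 2.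
Proof.
  intros H. cut (dSigma a b <= 2 * (1 / 2) ^ N).
  { intros K. pose proof (pow_lt 2 N ltac:(lra)).
    replace 2 with (2 ^ N * (2 * (1 / 2) ^ N)) at 2 by (rewrite Rdiv_1_l, pow_inv; field; lra).
    now apply Rmult_le_compat_l; [lra|]. }
  unfold dSigma.
  set (u := fun i => bitdiff (a i) (b i) / 2 ^ i).
  assert (Hu : forall i, 0 <= u i <= (1 / 2) ^ i).
  { intro i. unfold u. pose proof (bitdiff_bounds (a i) (b i)).
    pose proof (pow_lt 2 i ltac:(lra)).
    rewrite Rdiv_1_l, pow_inv. unfold Rdiv. split.
    - apply Rmult_le_pos; [lra|left; now apply Rinv_0_lt_compat].
    - rewrite <- (Rmult_1_l (/ 2 ^ i)) at 2.
      apply Rmult_le_compat_r; [left; now apply Rinv_0_lt_compat|lra]. }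
  assert (Hg : Rabs (1 / 2) < 1) by (rewrite Rabs_pos_eq; lra).
  assert (Hex : ex_series u).
  { apply (ex_series_le u (fun i => (1 / 2) ^ i)); [|now apply ex_series_geom].
    intros n. unfold norm; simpl. unfold abs; simpl. rewrite Rabs_pos_eq; apply Hu. }
  destruct N as [|N].
  - simpl. eapply Rle_trans.
    { apply (Series_le u (fun i => (1 / 2) ^ i)); [auto|now apply ex_series_geom]. }
    rewrite Series_geom; auto. lra.
  - rewrite (Series_incr_n u (S N)); [|lia|auto].
    assert (E : sum_f_R0 u (Init.Nat.pred (S N)) = 0).
    { simpl. apply (sum_eq_R0 u N). intros k Hk. unfold u. rewrite H by lia.
      destruct (b k); unfold bitdiff; simpl; lra. }
    rewrite E, Rplus_0_l.
    eapply Rle_trans; [apply (Series_le _ (fun k => (1 / 2) ^ (S N) * (1 / 2) ^ k))|].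
    + intros n. split; [apply Hu|]. rewrite <- pow_add. apply Hu.
    + exact (ex_series_scal_l ((1 / 2) ^ (S N)) (fun k => (1 / 2) ^ k) (ex_series_geom _ Hg)).
    + rewrite Series_scal_l, Series_geom; auto. lra.
Qed.

Lemma Sigma_not_countable : ~ exists G : Sigma -> nat, forall s t, G s = G t -> s = t.
Proof.
  intros [G HG].
  set (F := fun k : nat => epsilon (inhabits (fun _ : nat => true)) (fun t : Sigma => G t = k)).
  set (d := fun k : nat => negb (F k k)).
  assert (HF : F (G d) = d).
  { apply HG. unfold F. apply (epsilon_spec _ (fun t : Sigma => G t = G d)). now exists d. }
  assert (E : d (G d) = negb (F (G d) (G d))) by reflexivity.
  rewrite HF in E. destruct (d (G d)); discriminate.
Qed.

(* Block [k] of [scramble t] occupies positions [k^2 .. (k+1)^2 - 1] and reads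
   [k] zeros, a one, then [t 0 .. t (k-1)]. *)
Definition scramble (t : Sigma) : Sigma := fun n =>
  let k := Nat.sqrt n in let i := (n - k * k)%nat in
  if (i <? k)%nat then false else if (i =? k)%nat then true else t (i - k - 1)%nat.

Lemma sqrt_square_add k i : (i <= 2 * k)%nat -> Nat.sqrt (k * k + i) = k.
Proof. intros H. apply Nat.sqrt_unique. split; nia. Qed.

Lemma scramble_zero t k i : (i < k)%nat -> scramble t (k * k + i)%nat = false.
Proof.
  intros H. unfold scramble. rewrite sqrt_square_add by lia.
  replace (k * k + i - k * k)%nat with i by lia.
  destruct (Nat.ltb_spec i k); [reflexivity|lia].
Qed.

Lemma scramble_one t k : scramble t (k * k + k)%nat = true.
Proof.
  unfold scramble. rewrite sqrt_square_add by lia.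
  replace (k * k + k - k * k)%nat with k by lia.
  now rewrite Nat.ltb_irrefl, Nat.eqb_refl.
Qed.

Lemma scramble_bit t k i : (i < k)%nat -> scramble t (k * k + k + 1 + i)%nat = t i.
Proof.
  intros H. unfold scramble.
  replace (k * k + k + 1 + i)%nat with (k * k + (k + 1 + i))%nat by lia.
  rewrite sqrt_square_add by lia.
  replace (k * k + (k + 1 + i) - k * k)%nat with (k + 1 + i)%nat by lia.
  destruct (Nat.ltb_spec (k + 1 + i) k); [lia|].
  destruct (Nat.eqb_spec (k + 1 + i) k); [lia|]. f_equal. lia.
Qed.

Lemma scramble_inj t t' : scramble t = scramble t' -> t = t'.
Proof.
  intros E. apply functional_extensionality. intro i.
  rewrite <- (scramble_bit t (S i) i), <- (scramble_bit t' (S i) i) by lia. now rewrite E.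
Qed.

Lemma scramble_not_eventually_periodic t p N : (1 <= p)%nat ->
  ~ (forall j, (N <= j)%nat -> scramble t (j + p)%nat = scramble t j).
Proof.
  intros Hp H.
  set (P := ((N + 1) * (N + 1) + (N + 1))%nat).
  assert (HP : forall q, scramble t (P + q * p)%nat = true).
  { induction q as [|q IH]; [rewrite Nat.add_0_r; apply scramble_one|].
    replace (P + S q * p)%nat with ((P + q * p) + p)%nat by lia.
    rewrite H by (unfold P; nia). exact IH. }
  set (k := (P + p)%nat).
  assert (Hq : exists q, (k * k - P <= q * p < k * k - P + p)%nat).
  { exists ((k * k - P + p - 1) / p)%nat. split.
    - pose proof (Nat.div_mod (k * k - P + p - 1) p ltac:(lia)).
      pose proof (Nat.mod_upper_bound (k * k - P + p - 1) p ltac:(lia)). nia.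
    - pose proof (Nat.Div0.mul_div_le (k * k - P + p - 1) p). nia. }
  destruct Hq as [q Hq].
  specialize (HP q).
  replace (P + q * p)%nat with (k * k + (P + q * p - k * k))%nat in HP by (unfold k in *; nia).
  rewrite scramble_zero in HP by (unfold k in *; nia). discriminate.
Qed.

(** * Horseshoes and chaos *)

Definition covers (g : R -> R) (a b c d : R) : Prop :=
  forall y, c <= y <= d -> exists x, a <= x <= b /\ g x = y.

Definition expands_on (g : R -> R) (lam a b : R) : Prop :=
  forall x y, a <= x <= b -> a <= y <= b -> lam * Rabs (x - y) <= Rabs (g x - g y).

Definition horseshoe (g : R -> R) (lam a0 b0 a1 b1 : R) : Prop :=
  (a0 < b0 /\ b0 < a1 /\ a1 < b1 /\ 1 < lam) /\
  covers g a0 b0 a0 b1 /\ covers g a1 b1 a0 b1 /\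
  expands_on g lam a0 b0 /\ expands_on g lam a1 b1.

Lemma expands_on_of_derivative (g g' : R -> R) (lam a b : R) :
  (forall c, a <= c <= b -> derivable_pt_lim g c (g' c)) ->
  (forall c, a <= c <= b -> lam <= Rabs (g' c)) ->
  expands_on g lam a b.
Proof.
  intros Hd Hb. assert (K : forall x y, a <= x <= y -> y <= b ->
    lam * Rabs (x - y) <= Rabs (g x - g y)).
  { intros x y Hx Hy. destruct (mean_value g g' x y) as [c [Hc E]]; [lra|intros; apply Hd; lra|].
    rewrite Rabs_minus_sym, (Rabs_minus_sym (g x)), E, Rabs_mult.
    apply Rmult_le_compat_r; [apply Rabs_pos|]. apply Hb. lra. }
  intros x y Hx Hy. destruct (Rle_dec x y).
  - apply K; lra.
  - rewrite Rabs_minus_sym, (Rabs_minus_sym (g x)). apply K; lra.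
Qed.

Lemma covers_of_ends (g : R -> R) a b c d : continuity g -> a <= b ->
  (g a <= c /\ d <= g b \/ d <= g a /\ g b <= c) -> covers g a b c d.
Proof.
  intros Hg Hab Hends y Hy.
  assert (Hc : continuity (fun x => g x - y)).
  { intro. apply continuity_pt_minus; [apply Hg|apply continuity_pt_const; now intros ? ?]. }
  destruct Hends as [[H1 H2]|[H1 H2]].
  - destruct (IVT_cor _ a b Hc Hab) as [x [Hx E]]; [nra|]. exists x. split; auto. lra.
  - destruct (IVT_cor _ a b Hc Hab) as [x [Hx E]]; [nra|]. exists x. split; auto. lra.
Qed.

Section Horseshoe.

Variable f : R -> R.
Variable m : nat.
Variables lam a0 b0 a1 b1 : R.
Hypothesis f_cont : continuity f.
Hypothesis m_pos : (1 <= m)%nat.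
Hypothesis a0_lt_b0 : a0 < b0.
Hypothesis b0_lt_a1 : b0 < a1.
Hypothesis a1_lt_b1 : a1 < b1.
Hypothesis lam_gt_1 : 1 < lam.
Hypothesis covers0 : covers (iter f m) a0 b0 a0 b1.
Hypothesis covers1 : covers (iter f m) a1 b1 a0 b1.
Hypothesis expands0 : expands_on (iter f m) lam a0 b0.
Hypothesis expands1 : expands_on (iter f m) lam a1 b1.

Local Notation g := (iter f m).

Definition branch (b : bool) (x : R) : Prop := if b then a1 <= x <= b1 else a0 <= x <= b0.
Definition in_branches (x : R) : Prop := a0 <= x <= b0 \/ a1 <= x <= b1.
Definition symbol (x : R) : bool := if Rle_dec x ((b0 + a1) / 2) then false else true.
Definition Lambda (x : R) : Prop := forall n, in_branches (iter g n x).
Definition itinerary (x : R) : Sigma := fun n => symbol (iter g n x).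

Let gap := a1 - b0.

Lemma continuity_g : continuity g.
Proof. now apply continuity_iter. Qed.

Lemma branch_symbol x : in_branches x -> branch (symbol x) x.
Proof. intros [H|H]; unfold symbol; destruct Rle_dec; simpl; lra. Qed.

Lemma symbol_branch b x : branch b x -> symbol x = b /\ in_branches x.
Proof.
  destruct b; simpl; intros H; unfold symbol, in_branches; destruct Rle_dec; split; (lra || reflexivity).
Qed.

Lemma branch_bounds b x : branch b x -> a0 <= x <= b1.
Proof. destruct b; simpl; lra. Qed.

Lemma branch_expands b x y : branch b x -> branch b y -> lam * Rabs (x - y) <= Rabs (g x - g y).
Proof. destruct b; simpl; auto. Qed.

Lemma branch_covers b y : a0 <= y <= b1 -> exists x, branch b x /\ g x = y.
Proof. destruct b; simpl; auto. Qed.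

Lemma Lambda_bounds x : Lambda x -> a0 <= x <= b1.
Proof. intros H. destruct (H O) as [K|K]; simpl in K; lra. Qed.

Lemma Lambda_iter n x : Lambda x -> Lambda (iter g n x).
Proof. intros H k. rewrite <- iter_add. apply H. Qed.

Lemma itinerary_iter n x k : itinerary (iter g n x) k = itinerary x (n + k)%nat.
Proof. unfold itinerary. now rewrite <- iter_add, Nat.add_comm. Qed.

Lemma itinerary_g x : itinerary (g x) = shift (itinerary x).
Proof. apply functional_extensionality. intro n. unfold itinerary, shift. now rewrite iter_succ_r. Qed.

Lemma symbol_eq_of_close u v : in_branches u -> in_branches v -> Rabs (u - v) < gap ->
  symbol u = symbol v.
Proof.
  intros Hu Hv H. unfold gap in H. apply Rabs_def2 in H.
  unfold symbol; destruct Hu, Hv; do 2 destruct Rle_dec; (reflexivity || lra).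
Qed.

Lemma gap_le_of_symbol_neq u v : in_branches u -> in_branches v -> symbol u <> symbol v ->
  gap <= Rabs (u - v).
Proof.
  intros Hu Hv H. destruct (Rle_dec gap (Rabs (u - v))) as [K|K]; auto.
  exfalso. apply H, symbol_eq_of_close; auto. lra.
Qed.

Lemma dist_le_of_itinerary_agree N : forall x y, Lambda x -> Lambda y ->
  (forall k, (k < N)%nat -> itinerary x k = itinerary y k) -> lam ^ N * Rabs (x - y) <= b1 - a0.
Proof.
  induction N as [|N IH]; intros x y Hx Hy H.
  - simpl. pose proof (Lambda_bounds x Hx). pose proof (Lambda_bounds y Hy).
    unfold Rabs; destruct Rcase_abs; lra.
  - pose proof (branch_symbol x (Hx O)) as Bx. pose proof (branch_symbol y (Hy O)) as By.
    assert (E : symbol x = symbol y) by (apply (H O); lia). rewrite E in Bx.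
    pose proof (branch_expands _ _ _ Bx By) as Ex.
    assert (IHg : lam ^ N * Rabs (g x - g y) <= b1 - a0).
    { apply IH; try now apply (Lambda_iter 1).
      intros k Hk. rewrite !itinerary_g. apply H. lia. }
    assert (lam ^ N * (lam * Rabs (x - y)) <= lam ^ N * Rabs (g x - g y))
      by (apply Rmult_le_compat_l; [apply pow_le|]; lra).
    simpl. lra.
Qed.

Lemma close_of_itinerary_agree eps : 0 < eps -> exists N,
  forall x y, Lambda x -> Lambda y ->
  (forall k, (k < N)%nat -> itinerary x k = itinerary y k) -> Rabs (x - y) < eps.
Proof.
  intros He. destruct (small_of_pow_mul_le lam (b1 - a0) eps lam_gt_1 He) as [N HN].
  exists N. intros x y Hx Hy H. now apply HN, dist_le_of_itinerary_agree.
Qed.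

Lemma itinerary_inj x y : Lambda x -> Lambda y -> itinerary x = itinerary y -> x = y.
Proof.
  intros Hx Hy E. destruct (Req_dec x y) as [|Hne]; auto. exfalso.
  assert (P : 0 < Rabs (x - y)) by (apply Rabs_pos_lt; lra).
  destruct (close_of_itinerary_agree _ P) as [N HN].
  specialize (HN x y Hx Hy (fun k _ => f_equal (fun c => c k) E)). lra.
Qed.

(* A point with itinerary [s] is the limit of [inv_branch (s 0) (inv_branch (s 1) (... a0))]:
   each inverse branch contracts by [1/lam]. *)
Definition inv_branch (b : bool) (y : R) : R :=
  epsilon (inhabits 0) (fun x => branch b x /\ g x = y).

Lemma inv_branch_spec b y : a0 <= y <= b1 -> branch b (inv_branch b y) /\ g (inv_branch b y) = y.
Proof. intros H. apply (epsilon_spec _ (fun x => branch b x /\ g x = y)). now apply branch_covers. Qed.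

Fixpoint preimage_chain (s : Sigma) (n : nat) : R :=
  match n with O => a0 | S n => inv_branch (s O) (preimage_chain (shift s) n) end.

Lemma preimage_chain_bounds n s : a0 <= preimage_chain s n <= b1.
Proof.
  revert s. induction n as [|n IH]; intro s; simpl; [lra|].
  apply (branch_bounds (s O)), inv_branch_spec, IH.
Qed.

Lemma preimage_chain_close N : forall s n n', (N <= n)%nat -> (N <= n')%nat ->
  lam ^ N * Rabs (preimage_chain s n - preimage_chain s n') <= b1 - a0.
Proof.
  induction N as [|N IH]; intros s n n' Hn Hn'.
  - simpl. pose proof (preimage_chain_bounds n s). pose proof (preimage_chain_bounds n' s).
    unfold Rabs; destruct Rcase_abs; lra.
  - destruct n as [|n]; [lia|]. destruct n' as [|n']; [lia|]. simpl preimage_chain.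
    set (y := preimage_chain (shift s) n). set (y' := preimage_chain (shift s) n').
    destruct (inv_branch_spec (s O) y (preimage_chain_bounds n _)) as [B E].
    destruct (inv_branch_spec (s O) y' (preimage_chain_bounds n' _)) as [B' E'].
    pose proof (branch_expands _ _ _ B B') as C. rewrite E, E' in C.
    pose proof (IH (shift s) n n' ltac:(lia) ltac:(lia)) as I. fold y y' in I.
    assert (lam ^ N * (lam * Rabs (inv_branch (s O) y - inv_branch (s O) y')) <= lam ^ N * Rabs (y - y'))
      by (apply Rmult_le_compat_l; [apply pow_le|]; lra).
    simpl. lra.
Qed.

Lemma preimage_chain_cauchy s : Cauchy_crit (preimage_chain s).
Proof.
  intros eps He. destruct (small_of_pow_mul_le lam (b1 - a0) eps lam_gt_1 He) as [N HN].
  exists N. intros n n' Hn Hn'. now apply HN, preimage_chain_close.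
Qed.

Definition point_of (s : Sigma) : R :=
  proj1_sig (Rcomplete.R_complete (preimage_chain s) (preimage_chain_cauchy s)).

Lemma point_of_limit s : Un_cv (preimage_chain s) (point_of s).
Proof. unfold point_of. now destruct Rcomplete.R_complete. Qed.

Lemma point_of_branch s : branch (s O) (point_of s).
Proof.
  pose proof (Un_cv_succ _ _ (point_of_limit s)) as C. simpl in C.
  assert (K : forall n, branch (s O) (inv_branch (s O) (preimage_chain (shift s) n)))
    by (intro n; apply inv_branch_spec, preimage_chain_bounds).
  destruct (s O); simpl in *; eapply Un_cv_interval; eauto.
Qed.

Lemma point_of_g s : g (point_of s) = point_of (shift s).
Proof.
  pose proof (continuity_seq g _ _ (continuity_g (point_of s)) (Un_cv_succ _ _ (point_of_limit s))) as C.
  apply (UL_sequence (preimage_chain (shift s))); [|apply point_of_limit].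
  eapply Un_cv_ext; [|exact C]. intro n. simpl. apply inv_branch_spec, preimage_chain_bounds.
Qed.

Lemma point_of_iter n s : iter g n (point_of s) = point_of (fun k => s (n + k)%nat).
Proof.
  revert s. induction n as [|n IH]; intro s; [reflexivity|].
  rewrite iter_succ_r, point_of_g, IH. reflexivity.
Qed.

Lemma point_of_spec s : Lambda (point_of s) /\ itinerary (point_of s) = s.
Proof.
  assert (K : forall n, branch (s n) (iter g n (point_of s))).
  { intro n. rewrite point_of_iter. pose proof (point_of_branch (fun k => s (n + k)%nat)) as P.
    simpl in P. now rewrite Nat.add_0_r in P. }
  split.
  - intro n. apply (symbol_branch (s n)), K.
  - apply functional_extensionality. intro n. apply (symbol_branch (s n)), K.
Qed.

Lemma Lambda_closed : closed_set Lambda.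
Proof.
  apply closed_set_of_eps. intros x Hx.
  apply not_all_ex_not in Hx as [n Hn]. unfold in_branches in Hn.
  pose proof (closed_set_union _ _ (closed_set_interval a0 b0) (closed_set_interval a1 b1)) as Hcl.
  destruct (eps_of_closed_set _ Hcl (iter g n x) Hn) as [d1 [Hd1 K1]].
  destruct (continuity_pt_eps (iter g n) x (continuity_iter g continuity_g n x) d1 Hd1) as [d [Hd K]].
  exists d. split; auto. intros z Hz HY. exact (K1 _ (K z Hz) (HY n)).
Qed.

Lemma Lambda_compact : compact Lambda.
Proof.
  apply (compact_P4 (fun c => a0 <= c <= b1)); [apply compact_P3|apply Lambda_closed|].
  intros x Hx. now apply Lambda_bounds.
Qed.

Lemma itinerary_locally_agree N y : Lambda y -> exists delta, 0 < delta /\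
  forall z, Lambda z -> Rabs (z - y) < delta -> forall k, (k < N)%nat -> itinerary z k = itinerary y k.
Proof.
  intros Hy. induction N as [|N IH].
  - exists 1. split; [lra|]. intros; lia.
  - destruct IH as [d1 [Hd1 K1]].
    destruct (continuity_pt_eps (iter g N) y (continuity_iter g continuity_g N y) gap)
      as [d2 [Hd2 K2]]; [unfold gap; lra|].
    exists (Rmin d1 d2). split; [now apply Rmin_pos|].
    intros z Hz Hzy k Hk. destruct (Nat.eq_dec k N) as [->|Hne].
    + apply symbol_eq_of_close; [apply Hz|apply Hy|]. apply K2.
      eapply Rlt_le_trans; [exact Hzy|apply Rmin_r].
    + apply K1; auto; [|lia]. eapply Rlt_le_trans; [exact Hzy|apply Rmin_l].
Qed.

Lemma itinerary_continuous y : Lambda y -> forall eps, 0 < eps -> exists delta, 0 < delta /\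
  forall z, Lambda z -> Rabs (z - y) < delta -> dSigma (itinerary z) (itinerary y) < eps.
Proof.
  intros Hy eps He.
  destruct (small_of_pow_mul_le 2 2 eps ltac:(lra) He) as [N HN].
  destruct (itinerary_locally_agree N y Hy) as [d [Hd K]].
  exists d. split; auto. intros z Hz Hzy. apply HN, dSigma_le_of_agree. auto.
Qed.

Variables A B : R.
Hypothesis A_le_a0 : A <= a0.
Hypothesis b1_le_B : b1 <= B.
Hypothesis f_maps_X : forall x, A <= x <= B -> A <= f x <= B.

Lemma iter_maps_X n x : A <= x <= B -> A <= iter f n x <= B.
Proof. induction n as [|n IH]; intros Hx; [exact Hx|]. apply f_maps_X, IH, Hx. Qed.

Lemma Lambda_in_X x : Lambda x -> A <= x <= B.
Proof. intros H. pose proof (Lambda_bounds x H). lra. Qed.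

Theorem horseshoe_BC_chaotic : BC_chaotic f (fun x => A <= x <= B).
Proof.
  exists m, Lambda, itinerary.
  split; [exact m_pos|]. split; [exact Lambda_in_X|]. split; [exact Lambda_compact|].
  split; [intros y Hy; exact (Lambda_iter 1 y Hy)|]. split; [exact itinerary_continuous|].
  split; [intro s; exists (point_of s); apply point_of_spec|].
  intros y _. apply itinerary_g.
Qed.

Definition scrambled (x : R) : Prop := exists t, Lambda x /\ itinerary x = scramble t.

Lemma scrambled_uncountable : uncountable scrambled.
Proof.
  intros [G HG]. apply Sigma_not_countable.
  exists (fun t => G (point_of (scramble t))). intros s t E.
  destruct (point_of_spec (scramble s)) as [Hs Is]. destruct (point_of_spec (scramble t)) as [Ht It].
  apply scramble_inj. rewrite <- Is, <- It. f_equal.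
  apply HG; auto; [now exists s|now exists t].
Qed.

Lemma scrambled_limsup_pos x y : scrambled x -> scrambled y -> x <> y ->
  Rbar_lt 0 (LimSup_seq (fun n => Rabs (iter f n x - iter f n y))).
Proof.
  intros [t [Hx Ix]] [t' [Hy Iy]] Hxy.
  assert (Hi : exists i, t i <> t' i).
  { apply not_all_ex_not. intro K. apply Hxy, itinerary_inj; auto.
    rewrite Ix, Iy. f_equal. now apply functional_extensionality. }
  destruct Hi as [i Hi].
  apply (LimSup_seq_pos _ gap); [unfold gap; lra|]. intro N.
  set (k := (S i + N)%nat). set (p := (k * k + k + 1 + i)%nat).
  exists (m * p)%nat. split; [unfold p, k; nia|].
  rewrite !(iter_mul f m). apply gap_le_of_symbol_neq; [apply Hx|apply Hy|].
  change (itinerary x p <> itinerary y p). rewrite Ix, Iy. unfold p.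
  rewrite !scramble_bit by (unfold k; lia). exact Hi.
Qed.

Lemma scrambled_liminf_zero x y : scrambled x -> scrambled y ->
  LimInf_seq (fun n => Rabs (iter f n x - iter f n y)) = 0.
Proof.
  intros [t [Hx Ix]] [t' [Hy Iy]].
  apply LimInf_seq_zero; [intros; apply Rabs_pos|].
  intros eps He N. destruct (close_of_itinerary_agree eps He) as [M HM].
  set (k := (M + N)%nat). exists (m * (k * k))%nat. split; [unfold k; nia|].
  rewrite !(iter_mul f m). apply HM; [now apply Lambda_iter|now apply Lambda_iter|].
  intros j Hj. rewrite !itinerary_iter, Ix, Iy, !scramble_zero by (unfold k; lia). reflexivity.
Qed.

Lemma iter_periodic p q k : iter f q p = p -> iter f (k * q) p = p.
Proof.
  intros Hp. induction k as [|k IH]; [reflexivity|].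
  replace (S k * q)%nat with (k * q + q)%nat by lia. now rewrite iter_add, Hp, IH.
Qed.

(* An orbit staying within gap/2 of a periodic orbit would have an eventually periodic
   itinerary, which [scramble t] is not. *)
Lemma scrambled_limsup_periodic_pos x p : scrambled x -> periodic_pt f p ->
  Rbar_lt 0 (LimSup_seq (fun n => Rabs (iter f n x - iter f n p))).
Proof.
  intros [t [Hx Ix]] [q [Hq Hp]].
  apply (LimSup_seq_pos _ (gap / 2)); [unfold gap; lra|].
  apply NNPP. intros K. apply not_all_ex_not in K as [N K].
  assert (Near : forall n, (N <= n)%nat -> Rabs (iter f n x - iter f n p) < gap / 2).
  { intros n Hn. apply Rnot_le_lt. intros L. apply K. now exists n. }
  apply (scramble_not_eventually_periodic t q N Hq). intros j Hj.
  rewrite <- Ix. unfold itinerary.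
  apply symbol_eq_of_close; [apply Hx|apply Hx|].
  rewrite <- !(iter_mul f m).
  assert (Pp : iter f (m * (j + q)) p = iter f (m * j) p).
  { replace (m * (j + q))%nat with (m * j + m * q)%nat by lia.
    now rewrite iter_add, (iter_periodic p q m Hp). }
  pose proof (Near (m * j)%nat ltac:(nia)) as K1.
  pose proof (Near (m * (j + q))%nat ltac:(nia)) as K2. rewrite Pp in K2.
  apply Rabs_def2 in K1. apply Rabs_def2 in K2. apply Rabs_def1; lra.
Qed.

Theorem horseshoe_LY_chaotic : LY_chaotic f (fun x => A <= x <= B).
Proof.
  exists scrambled.
  split; [intros x [t [Hx _]]; now apply Lambda_in_X|].
  split; [exact scrambled_uncountable|].
  split.
  - intros x y Hx Hy Hxy. split; [now apply scrambled_limsup_pos|now apply scrambled_liminf_zero].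
  - intros x p Hx _ Hp. now apply scrambled_limsup_periodic_pos.
Qed.

Definition Lambda_orbit (x : R) : Prop :=
  exists i, (i < m)%nat /\ image_dir (iter f i) Lambda x.

Lemma Lambda_orbit_iter i y : (i < m)%nat -> Lambda y -> Lambda_orbit (iter f i y).
Proof. intros Hi Hy. exists i. split; auto. now exists y. Qed.

Lemma Lambda_orbit_in_X x : Lambda_orbit x -> A <= x <= B.
Proof. intros [i [_ [y [-> Hy]]]]. now apply iter_maps_X, Lambda_in_X. Qed.

Lemma Lambda_orbit_invariant x : Lambda_orbit x -> Lambda_orbit (f x).
Proof.
  intros [i [Hi [y [-> Hy]]]]. destruct (Nat.eq_dec (S i) m) as [E|E].
  - apply (Lambda_orbit_iter 0); [lia|].
    change (Lambda (iter f (S i) y)). rewrite E. exact (Lambda_iter 1 y Hy).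
  - apply (Lambda_orbit_iter (S i)); auto. lia.
Qed.

Lemma Lambda_orbit_compact : compact Lambda_orbit.
Proof.
  apply (compact_P4 (fun c => A <= c <= B)); [apply compact_P3| |exact Lambda_orbit_in_X].
  apply closed_set_finite_union. intro i.
  apply compact_P2, continuity_compact; [|apply Lambda_compact]. now apply continuity_iter.
Qed.

(* The three Devaney properties all come from prescribing the itinerary of a point of Lambda
   and pushing it forward by [f^i]. *)
Lemma Lambda_orbit_approx x eps : Lambda_orbit x -> 0 < eps ->
  exists i y N, (i < m)%nat /\ Lambda y /\ x = iter f i y /\ (1 <= N)%nat /\
  forall z, Lambda z -> (forall k, (k < N)%nat -> itinerary z k = itinerary y k) ->
  Rabs (iter f i z - x) < eps.
Proof.
  intros [i [Hi [y [Ex Hy]]]] He.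
  destruct (continuity_pt_eps (iter f i) y (continuity_iter f f_cont i y) eps He) as [d [Hd Kd]].
  destruct (close_of_itinerary_agree d Hd) as [N HN].
  exists i, y, (S N). refine (conj Hi (conj Hy (conj Ex (conj _ _)))); [lia|].
  intros z Hz Hagree. rewrite Ex. apply Kd, HN; auto.
Qed.

Lemma Lambda_orbit_transitive x y eps : Lambda_orbit x -> Lambda_orbit y -> 0 < eps ->
  exists z n, Lambda_orbit z /\ (1 <= n)%nat /\ Rabs (z - x) < eps /\ Rabs (iter f n z - y) < eps.
Proof.
  intros Hx [j [Hj [y' [Ey Hy']]]] He.
  destruct (Lambda_orbit_approx x eps Hx He) as [i [x' [N [Hi [Hx' [Ex [HN K]]]]]]].
  destruct (point_of_spec (fun k => if (k <? N)%nat then itinerary x' k else itinerary y' (k - N)%nat))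
    as [Hz Iz].
  set (z := point_of _) in Hz, Iz.
  assert (Ez : iter g N z = y').
  { apply itinerary_inj; [now apply Lambda_iter|auto|]. apply functional_extensionality. intro k.
    rewrite itinerary_iter, Iz. destruct (Nat.ltb_spec (N + k) N); [lia|]. f_equal. lia. }
  exists (iter f i z), (m * N + j - i)%nat.
  split; [now apply Lambda_orbit_iter|]. split; [nia|]. split.
  - apply K; auto. intros k Hk. rewrite Iz. now destruct (Nat.ltb_spec k N); [|lia].
  - rewrite <- iter_add. replace (m * N + j - i + i)%nat with (j + m * N)%nat by nia.
    rewrite iter_add, iter_mul, Ez, <- Ey, Rminus_diag, Rabs_R0. exact He.
Qed.

Lemma Lambda_orbit_periodic_dense x eps : Lambda_orbit x -> 0 < eps ->
  exists p, Lambda_orbit p /\ periodic_pt f p /\ Rabs (p - x) < eps.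
Proof.
  intros Hx He.
  destruct (Lambda_orbit_approx x eps Hx He) as [i [x' [N [Hi [Hx' [Ex [HN K]]]]]]].
  destruct (point_of_spec (fun k => itinerary x' (k mod N)%nat)) as [Hz Iz].
  set (z := point_of _) in Hz, Iz.
  assert (Ez : iter g N z = z).
  { apply itinerary_inj; [now apply Lambda_iter|auto|]. apply functional_extensionality. intro k.
    rewrite itinerary_iter, Iz. f_equal. replace (N + k)%nat with (k + 1 * N)%nat by lia.
    apply Nat.Div0.mod_add. }
  exists (iter f i z). split; [now apply Lambda_orbit_iter|]. split.
  - exists (m * N)%nat. split; [nia|]. now rewrite iter_comm, iter_mul, Ez.
  - apply K; auto. intros k Hk. rewrite Iz. now rewrite Nat.mod_small.
Qed.

Lemma Lambda_orbit_sensitive x eps : Lambda_orbit x -> 0 < eps ->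
  exists y n, Lambda_orbit y /\ Rabs (y - x) < eps /\ gap / 2 < Rabs (iter f n x - iter f n y).
Proof.
  intros Hx He.
  destruct (Lambda_orbit_approx x eps Hx He) as [i [x' [N [Hi [Hx' [Ex [HN K]]]]]]].
  destruct (point_of_spec (fun k => if (k =? N)%nat then negb (itinerary x' N) else itinerary x' k))
    as [Hy Iy].
  set (y := point_of _) in Hy, Iy.
  exists (iter f i y), (m * N - i)%nat. split; [now apply Lambda_orbit_iter|]. split.
  - apply K; auto. intros k Hk. rewrite Iy. now destruct (Nat.eqb_spec k N); [lia|].
  - rewrite Ex, <- !iter_add. replace (m * N - i + i)%nat with (m * N)%nat by nia.
    rewrite !iter_mul.
    assert (gap <= Rabs (iter g N x' - iter g N y)).
    { apply gap_le_of_symbol_neq; [apply Hx'|apply Hy|].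
      change (itinerary x' N <> itinerary y N). rewrite Iy, Nat.eqb_refl.
      now destruct (itinerary x' N). }
    unfold gap in *. lra.
Qed.

Theorem horseshoe_D_chaotic : D_chaotic f (fun x => A <= x <= B).
Proof.
  exists Lambda_orbit.
  split; [exists (point_of (fun _ => true)); apply (Lambda_orbit_iter 0); [lia|apply point_of_spec]|].
  split; [exact Lambda_orbit_in_X|]. split; [exact Lambda_orbit_compact|].
  split; [exact Lambda_orbit_invariant|].
  split; [intros; now apply Lambda_orbit_transitive|].
  split; [intros; now apply Lambda_orbit_periodic_dense|].
  exists (gap / 2). split; [unfold gap; lra|]. intros; now apply Lambda_orbit_sensitive.
Qed.

End Horseshoe.

Theorem horseshoe_chaotic (f : R -> R) (m : nat) (lam a0 b0 a1 b1 A B : R) :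
  continuity f -> (1 <= m)%nat -> horseshoe (iter f m) lam a0 b0 a1 b1 ->
  A <= a0 -> b1 <= B -> (forall x, A <= x <= B -> A <= f x <= B) ->
  LY_chaotic f (fun x => A <= x <= B) /\ BC_chaotic f (fun x => A <= x <= B) /\
  D_chaotic f (fun x => A <= x <= B).
Proof.
  intros Hf Hm [[H1 [H2 [H3 H4]]] [C0 [C1 [E0 E1]]]] HA HB HX.
  split; [|split];
    [apply (horseshoe_LY_chaotic f m lam a0 b0 a1 b1) | apply (horseshoe_BC_chaotic f m lam a0 b0 a1 b1)
    | apply (horseshoe_D_chaotic f m lam a0 b0 a1 b1)]; assumption.
Qed.

(** * The map f_r *)

Definition dfr (r x : R) : R := x * (2 - x) * exp (r - x).

Lemma fr_derivable r x : derivable_pt_lim (fr r) x (dfr r x).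
Proof.
  apply is_derive_Reals. unfold fr, dfr.
  auto_derive; auto. replace (r + - x) with (r - x) by ring. ring.
Qed.

Lemma continuity_fr r : continuity (fr r).
Proof. intro x. apply derivable_continuous_pt. exists (dfr r x). apply fr_derivable. Qed.

Lemma fr_increasing r x y : 0 <= x -> x <= y -> y <= 2 -> fr r x <= fr r y.
Proof.
  intros H0 H1 H2. destruct (mean_value (fr r) (dfr r) x y) as [c [Hc E]]; auto.
  { intros; apply fr_derivable. }
  assert (0 <= dfr r c) by (unfold dfr; pose proof (exp_pos (r - c)); apply Rmult_le_pos; nra).
  nra.
Qed.

Lemma fr_decreasing r x y : 2 <= x -> x <= y -> fr r y <= fr r x.
Proof.
  intros H1 H2. destruct (mean_value (fr r) (dfr r) x y) as [c [Hc E]]; auto.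
  { intros; apply fr_derivable. }
  assert (dfr r c <= 0).
  { unfold dfr. pose proof (exp_pos (r - c)).
    assert (0 <= c * (c - 2) * exp (r - c)) by (apply Rmult_le_pos; nra). nra. }
  nra.
Qed.

Lemma fr_le_param r r' x : r <= r' -> fr r x <= fr r' x.
Proof.
  intros. unfold fr. apply Rmult_le_compat_l; [apply pow2_ge_0|].
  destruct (Req_dec r r') as [->|]; [lra|]. left; apply exp_increasing; lra.
Qed.

Lemma fr_le_fr_2 r x : 0 <= x -> fr r x <= fr r 2.
Proof.
  intros. destruct (Rle_dec x 2); [apply fr_increasing | apply fr_decreasing]; lra.
Qed.

Lemma fr_pos r x : 0 < x -> 0 < fr r x.
Proof. intros. unfold fr. apply Rmult_lt_0_compat; [apply pow_lt; lra | apply exp_pos]. Qed.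

Lemma fr_orbit_interval_invariant r :
  iter (fr r) 2 2 < iter (fr r) 3 2 -> forall x,
  iter (fr r) 2 2 <= x <= fr r 2 -> iter (fr r) 2 2 <= fr r x <= fr r 2.
Proof.
  simpl. intros Hlt x Hx. pose proof (fr_pos r 2 ltac:(lra)).
  pose proof (fr_pos r (fr r 2) ltac:(lra)). split.
  - destruct (Rle_dec x 2).
    + left. eapply Rlt_le_trans; [exact Hlt|]. apply fr_increasing; lra.
    + apply fr_decreasing; lra.
  - apply fr_le_fr_2. lra.
Qed.

(** * Rational arithmetic and certified bounds for the exponential *)

Lemma Q2R_make z p : Q2R (z # p) = IZR z / IZR (Zpos p).
Proof. reflexivity. Qed.

Lemma Q2R_inject_Z z : Q2R (inject_Z z) = IZR z.
Proof. unfold Q2R; simpl; field. Qed.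

Lemma Q2R_2 : Q2R 2 = 2.
Proof. unfold Q2R; simpl; field. Qed.

Lemma Q2R_nonneg z p : (0 <= z)%Z -> 0 <= Q2R (z # p).
Proof. intros. rewrite Q2R_make. apply Rdiv_le_0_compat; [now apply IZR_le | now apply IZR_lt]. Qed.

Lemma Q2R_min x y : Q2R (Qmin x y) = Rmin (Q2R x) (Q2R y).
Proof.
  destruct (Q.min_spec x y) as [[H E] | [H E]]; apply Qeq_eqR in E; rewrite E.
  - apply Qlt_Rlt in H. unfold Rmin; destruct Rle_dec; lra.
  - apply Qle_Rle in H. unfold Rmin; destruct Rle_dec; lra.
Qed.

Lemma Qle_bool_R x y : Qle_bool x y = true -> Q2R x <= Q2R y.
Proof. intros H. now apply Qle_Rle, Qle_bool_iff. Qed.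

Definition Qltb (x y : Q) : bool := negb (Qle_bool y x).

Lemma Qltb_R x y : Qltb x y = true -> Q2R x < Q2R y.
Proof.
  unfold Qltb. intros H. apply Qlt_Rlt, Qnot_le_lt. intros K. apply Qle_bool_iff in K.
  now rewrite K in H.
Qed.

(* Fixed-point numbers are [z # scale]; since [scale = 2^80], the square of [z # scale] is
   [Z.shiftr (z * z) 80 # scale] up to rounding. *)
Definition scale : positive := 2 ^ 80.

Lemma shiftr_scale a : Z.shiftr a 80 = (a / Zpos scale)%Z.
Proof. now rewrite Z.shiftr_div_pow2. Qed.

Definition floor_scaled (x : Q) : Z := Qfloor (x * inject_Z (Zpos scale)).
Definition ceiling_scaled (x : Q) : Z := Qceiling (x * inject_Z (Zpos scale)).

Lemma scale_pos : 0 < IZR (Zpos scale).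
Proof. now apply IZR_lt. Qed.

Lemma floor_scaled_le x : Q2R (floor_scaled x # scale) <= Q2R x.
Proof.
  unfold floor_scaled. rewrite Q2R_make. pose proof scale_pos as Hs.
  pose proof (Qle_Rle _ _ (Qfloor_le (x * inject_Z (Zpos scale)))) as H.
  rewrite Q2R_mult, !Q2R_inject_Z in H.
  apply Rmult_le_reg_r with (IZR (Zpos scale)); auto.
  unfold Rdiv; rewrite Rmult_assoc, Rinv_l; lra.
Qed.

Lemma le_ceiling_scaled x : Q2R x <= Q2R (ceiling_scaled x # scale).
Proof.
  unfold ceiling_scaled. rewrite Q2R_make. pose proof scale_pos as Hs.
  pose proof (Qle_Rle _ _ (Qle_ceiling (x * inject_Z (Zpos scale)))) as H.
  rewrite Q2R_mult, !Q2R_inject_Z in H.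
  apply Rmult_le_reg_r with (IZR (Zpos scale)); auto.
  unfold Rdiv; rewrite Rmult_assoc, Rinv_l; lra.
Qed.

Lemma floor_scaled_nonneg x : 0 <= Q2R x -> (0 <= floor_scaled x)%Z.
Proof.
  intros Hx. unfold floor_scaled. change 0%Z with (Qfloor 0). apply Qfloor_resp_le.
  apply Rle_Qle. rewrite Q2R_mult, Q2R_inject_Z, RMicromega.Q2R_0.
  pose proof scale_pos as Hs. apply Rmult_le_pos; lra.
Qed.

Definition round_down (x : Q) : Q := floor_scaled x # scale.
Definition round_up (x : Q) : Q := ceiling_scaled x # scale.

Fixpoint square_down (n : nat) (z : Z) : Z :=
  match n with O => z | S n => square_down n (Z.shiftr (z * z) 80) end.

Fixpoint square_up (n : nat) (z : Z) : Z :=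
  match n with O => z | S n => square_up n (- Z.shiftr (- (z * z)) 80) end.

Lemma IZR_div_le a b : (0 < b)%Z -> IZR (a / b) <= IZR a / IZR b.
Proof.
  intros Hb. pose proof (Z.mul_div_le a b Hb) as K. apply IZR_le in K. rewrite mult_IZR in K.
  assert (0 < IZR b) by now apply IZR_lt.
  apply Rmult_le_reg_l with (IZR b); auto. field_simplify; lra.
Qed.

Lemma IZR_div_ge a b : (0 < b)%Z -> IZR a / IZR b <= IZR (- (- a / b)).
Proof.
  intros Hb. pose proof (IZR_div_le (- a) b Hb). rewrite opp_IZR in *.
  unfold Rdiv in *. lra.
Qed.

Lemma square_down_step z w : 0 <= Q2R (z # scale) <= exp w ->
  0 <= Q2R (Z.shiftr (z * z) 80 # scale) <= exp (2 * w).
Proof.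
  rewrite shiftr_scale, !Q2R_make. pose proof scale_pos as Hs.
  generalize (Zpos scale) Hs. clear Hs. intros s Hs [Hz1 Hz2].
  assert (Hs' : (0 < s)%Z) by now apply lt_IZR.
  assert (Hz0 : (0 <= z)%Z).
  { apply le_IZR. apply Rmult_le_reg_r with (/ IZR s); [now apply Rinv_0_lt_compat|]. lra. }
  split.
  - apply Rdiv_le_0_compat; auto. apply IZR_le, Z.div_pos; lia.
  - replace (2 * w) with (w + w) by ring. rewrite exp_plus.
    eapply Rle_trans; [|apply Rmult_le_compat; [apply Hz1|apply Hz1|apply Hz2|apply Hz2]].
    apply Rle_trans with (IZR (z * z) / IZR s / IZR s).
    + unfold Rdiv. apply Rmult_le_compat_r; [left; now apply Rinv_0_lt_compat|].
      apply IZR_div_le; lia.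
    + rewrite mult_IZR. apply Req_le. field. lra.
Qed.

Lemma square_up_step z w : exp w <= Q2R (z # scale) ->
  exp (2 * w) <= Q2R (- Z.shiftr (- (z * z)) 80 # scale).
Proof.
  rewrite shiftr_scale, !Q2R_make. pose proof scale_pos as Hs.
  generalize (Zpos scale) Hs. clear Hs. intros s Hs Hz.
  assert (Hs' : (0 < s)%Z) by now apply lt_IZR.
  pose proof (exp_pos w).
  replace (2 * w) with (w + w) by ring. rewrite exp_plus.
  eapply Rle_trans; [apply Rmult_le_compat; [lra|lra|apply Hz|apply Hz]|].
  apply Rle_trans with (IZR (z * z) / IZR s / IZR s).
  + rewrite mult_IZR. apply Req_le. field. lra.
  + unfold Rdiv. apply Rmult_le_compat_r; [left; now apply Rinv_0_lt_compat|].
    apply IZR_div_ge; lia.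
Qed.

Lemma square_down_sound n : forall z w, 0 <= Q2R (z # scale) <= exp w ->
  0 <= Q2R (square_down n z # scale) <= exp (2 ^ n * w).
Proof.
  induction n as [|n IH]; intros z w Hz.
  - simpl. now rewrite Rmult_1_l.
  - change (square_down (S n) z) with (square_down n (Z.shiftr (z * z) 80)).
    replace (2 ^ S n * w) with (2 ^ n * (2 * w)) by (simpl; ring).
    now apply IH, square_down_step.
Qed.

Lemma square_up_sound n : forall z w, exp w <= Q2R (z # scale) ->
  exp (2 ^ n * w) <= Q2R (square_up n z # scale).
Proof.
  induction n as [|n IH]; intros z w Hz.
  - simpl. now rewrite Rmult_1_l.
  - change (square_up (S n) z) with (square_up n (- Z.shiftr (- (z * z)) 80)).
    replace (2 ^ S n * w) with (2 ^ n * (2 * w)) by (simpl; ring).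
    now apply IH, square_up_step.
Qed.

Definition halve (n : nat) (q : Q) : Q := Nat.iter n (fun y => y * (1 # 2))%Q q.

Lemma Q2R_halve n q : Q2R q = 2 ^ n * Q2R (halve n q).
Proof.
  induction n as [|n IH]; simpl. ring.
  rewrite Q2R_mult, IH. unfold halve. rewrite Q2R_make. simpl. field.
Qed.

(* With [w = q / 2^n] and [|w| < 1], [1 + x <= exp x] gives
   [(1 + w)^(2^n) <= exp q <= (1 - w)^(-2^n)]; taking [n >= 30 + |q|] makes these bounds
   accurate to about [q^2 / 2^n]. *)
Definition halvings (q : Q) : nat := 30 + Z.to_nat (Z.max (Qceiling q) (Qceiling (- q))).

Lemma INR_lt_pow2 k : INR k < 2 ^ k.
Proof.
  induction k as [|k IH]; [simpl; lra|].
  rewrite S_INR. simpl. assert (1 <= 2 ^ k) by (apply pow_R1_Rle; lra). lra.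
Qed.

Lemma halve_small q : Rabs (Q2R (halve (halvings q) q)) < 1.
Proof.
  set (n := halvings q). set (c := Z.max (Qceiling q) (Qceiling (- q))).
  assert (Hc : Rabs (Q2R q) <= IZR c).
  { pose proof (Qle_Rle _ _ (Qle_ceiling q)) as H1.
    pose proof (Qle_Rle _ _ (Qle_ceiling (- q))) as H2.
    rewrite Q2R_inject_Z in H1, H2. rewrite Q2R_opp in H2.
    assert (IZR (Qceiling q) <= IZR c) by (apply IZR_le; lia).
    assert (IZR (Qceiling (- q)) <= IZR c) by (apply IZR_le; lia).
    unfold Rabs; destruct Rcase_abs; lra. }
  assert (Hn : IZR c < 2 ^ n).
  { destruct (Z.lt_ge_cases c 0).
    - assert (IZR c < 0) by (apply IZR_lt; lia). pose proof (pow_lt 2 n). lra.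
    - rewrite <- (Z2Nat.id c), <- INR_IZR_INZ by lia.
      eapply Rlt_le_trans; [apply INR_lt_pow2|].
      apply Rle_pow; [lra|]. unfold n, halvings. fold c. lia. }
  pose proof (Q2R_halve n q) as E. pose proof (pow_lt 2 n ltac:(lra)).
  rewrite E, Rabs_mult, (Rabs_pos_eq (2 ^ n)) in Hc by lra.
  apply Rmult_lt_reg_l with (2 ^ n); lra.
Qed.

Definition exp_lb (q : Q) : Q :=
  let n := halvings q in square_down n (floor_scaled (1 + halve n q)) # scale.

Definition exp_ub (q : Q) : Q :=
  let n := halvings q in square_up n (ceiling_scaled (1 / (1 - halve n q))) # scale.

Lemma exp_lb_sound q : 0 <= Q2R (exp_lb q) <= exp (Q2R q).
Proof.
  unfold exp_lb. set (n := halvings q). pose proof (halve_small q) as Hw. fold n in Hw.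
  rewrite (Q2R_halve n q). apply square_down_sound.
  set (w := halve n q) in *. apply Rabs_def2 in Hw. split.
  - apply Q2R_nonneg, floor_scaled_nonneg. rewrite Q2R_plus, RMicromega.Q2R_1. lra.
  - eapply Rle_trans; [apply floor_scaled_le|]. rewrite Q2R_plus, RMicromega.Q2R_1. apply exp_ineq1_le.
Qed.

Lemma exp_ub_sound q : exp (Q2R q) <= Q2R (exp_ub q).
Proof.
  unfold exp_ub. set (n := halvings q). pose proof (halve_small q) as Hw. fold n in Hw.
  rewrite (Q2R_halve n q). apply square_up_sound.
  set (w := halve n q) in *. apply Rabs_def2 in Hw.
  eapply Rle_trans; [|apply le_ceiling_scaled].
  assert (Hpos : 0 < Q2R (1 - w)) by (rewrite Q2R_minus, RMicromega.Q2R_1; lra).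
  rewrite Q2R_div by (intro E; apply Qeq_eqR in E; rewrite RMicromega.Q2R_0 in E; lra).
  rewrite RMicromega.Q2R_1, Q2R_minus, RMicromega.Q2R_1 in *.
  pose proof (exp_ineq1_le (- Q2R w)). pose proof (exp_pos (Q2R w)).
  replace (exp (Q2R w)) with (/ exp (- Q2R w)) by (rewrite exp_Ropp; field; lra).
  unfold Rdiv. rewrite Rmult_1_l. apply Rinv_le_contravar; lra.
Qed.

(** * Interval enclosures of f_r *)

Definition fr_lb (r x : Q) : Q := round_down (x * x * exp_lb (r - x))%Q.
Definition fr_ub (r x : Q) : Q := round_up (x * x * exp_ub (r - x))%Q.

Lemma fr_lb_sound r x : 0 <= Q2R (fr_lb r x) <= fr (Q2R r) (Q2R x).
Proof.
  unfold fr_lb, round_down. pose proof (exp_lb_sound (r - x)) as [H0 H1].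
  rewrite Q2R_minus in H1. assert (0 <= Q2R x * Q2R x) by nra.
  split.
  - apply Q2R_nonneg, floor_scaled_nonneg. rewrite !Q2R_mult. now apply Rmult_le_pos.
  - eapply Rle_trans; [apply floor_scaled_le|]. rewrite !Q2R_mult. unfold fr.
    replace (Q2R x ^ 2) with (Q2R x * Q2R x) by ring. now apply Rmult_le_compat_l.
Qed.

Lemma fr_ub_sound r x : fr (Q2R r) (Q2R x) <= Q2R (fr_ub r x).
Proof.
  unfold fr_ub, round_up. pose proof (exp_ub_sound (r - x)) as H.
  rewrite Q2R_minus in H. assert (0 <= Q2R x * Q2R x) by nra.
  eapply Rle_trans; [|apply le_ceiling_scaled]. rewrite !Q2R_mult. unfold fr.
  replace (Q2R x ^ 2) with (Q2R x * Q2R x) by ring. now apply Rmult_le_compat_l.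
Qed.

Definition encloses (I : Q * Q) (x : R) : Prop := Q2R (fst I) <= x <= Q2R (snd I).

Definition fr_enclosure (rl rh : Q) (I : Q * Q) : Q * Q :=
  let (xl, xh) := I in
  if Qle_bool xh 2 then (fr_lb rl xl, fr_ub rh xh)
  else if Qle_bool 2 xl then (fr_lb rl xh, fr_ub rh xl)
  else (Qmin (fr_lb rl xl) (fr_lb rl xh), fr_ub rh 2).

Lemma fr_enclosure_nonneg rl rh I : 0 <= Q2R (fst (fr_enclosure rl rh I)).
Proof.
  destruct I as [xl xh]; simpl.
  destruct (Qle_bool xh 2); [|destruct (Qle_bool 2 xl)]; simpl; try apply fr_lb_sound.
  rewrite Q2R_min. apply Rmin_glb; apply fr_lb_sound.
Qed.

Lemma fr_enclosure_sound rl rh I r x :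
  0 <= Q2R (fst I) -> Q2R rl <= r <= Q2R rh -> encloses I x ->
  encloses (fr_enclosure rl rh I) (fr r x).
Proof.
  destruct I as [xl xh]. unfold encloses; simpl. intros H0 Hr Hx.
  assert (Lo : forall y, Q2R (fr_lb rl y) <= fr r (Q2R y)).
  { intros y. eapply Rle_trans; [apply fr_lb_sound|]. apply fr_le_param; lra. }
  assert (Up : forall y, fr r (Q2R y) <= Q2R (fr_ub rh y)).
  { intros y. eapply Rle_trans; [|apply fr_ub_sound]. apply fr_le_param; lra. }
  destruct (Qle_bool xh 2) eqn:E1; [|destruct (Qle_bool 2 xl) eqn:E2]; simpl.
  - apply Qle_bool_R in E1. rewrite Q2R_2 in E1.
    pose proof (fr_increasing r (Q2R xl) x). pose proof (fr_increasing r x (Q2R xh)).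
    pose proof (Lo xl). pose proof (Up xh). split; lra.
  - apply Qle_bool_R in E2. rewrite Q2R_2 in E2.
    pose proof (fr_decreasing r (Q2R xl) x). pose proof (fr_decreasing r x (Q2R xh)).
    pose proof (Lo xh). pose proof (Up xl). split; lra.
  - rewrite Q2R_min. split.
    + destruct (Rle_dec x 2).
      * pose proof (fr_increasing r (Q2R xl) x). pose proof (Lo xl).
        eapply Rle_trans; [apply Rmin_l|]. lra.
      * pose proof (fr_decreasing r x (Q2R xh)). pose proof (Lo xh).
        eapply Rle_trans; [apply Rmin_r|]. lra.
    + pose proof (fr_le_fr_2 r x). pose proof (Up 2%Q). rewrite Q2R_2 in *. lra.
Qed.

Definition fr_slope_lb (rl : Q) (I : Q * Q) : Q :=
  let (p, q) := I in
  if Qle_bool 2 p then (p * (p - 2) * exp_lb (rl - q))%Q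
  else if Qle_bool q 2 then (Qmin (p * (2 - p)) (q * (2 - q)) * exp_lb (rl - q))%Q
  else 0%Q.

Lemma fr_slope_lb_sound rl I r x :
  0 <= Q2R (fst I) -> Q2R rl <= r -> encloses I x ->
  0 <= Q2R (fr_slope_lb rl I) <= Rabs (dfr r x).
Proof.
  destruct I as [p q]. unfold encloses; simpl. intros H0 Hr Hx.
  pose proof (exp_lb_sound (rl - q)) as [E0 E1]. rewrite Q2R_minus in E1.
  assert (E2 : exp (Q2R rl - Q2R q) <= exp (r - x)).
  { destruct (Req_dec (Q2R rl - Q2R q) (r - x)) as [->|]; [lra|]. left; apply exp_increasing; lra. }
  unfold dfr.
  rewrite !Rabs_mult, (Rabs_pos_eq x), (Rabs_pos_eq (exp _)) by (lra || apply Rlt_le, exp_pos).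
  destruct (Qle_bool 2 p) eqn:E3; [|destruct (Qle_bool q 2) eqn:E4].
  - apply Qle_bool_R in E3. rewrite Q2R_2 in E3. rewrite !Q2R_mult, Q2R_minus, Q2R_2.
    rewrite Rabs_left1 by lra.
    assert (0 <= Q2R p * (Q2R p - 2) <= x * - (2 - x)) by (split; nra).
    split; [apply Rmult_le_pos; lra|]. apply Rmult_le_compat; lra.
  - apply Qle_bool_R in E4. rewrite Q2R_2 in E4. rewrite Q2R_mult, Q2R_min, !Q2R_mult, !Q2R_minus, Q2R_2.
    rewrite Rabs_pos_eq by lra.
    assert (0 <= Rmin (Q2R p * (2 - Q2R p)) (Q2R q * (2 - Q2R q)) <= x * (2 - x)).
    { split; [apply Rmin_glb; nra|].
      destruct (Rle_dec (x + Q2R p) 2).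
      - eapply Rle_trans; [apply Rmin_l|]. nra.
      - eapply Rle_trans; [apply Rmin_r|]. nra. }
    split; [apply Rmult_le_pos; lra|]. apply Rmult_le_compat; lra.
  - rewrite RMicromega.Q2R_0. split; [lra|]. pose proof (exp_pos (r - x)). pose proof (Rabs_pos (2 - x)).
    apply Rmult_le_pos; [apply Rmult_le_pos|]; lra.
Qed.

(** * The horseshoe of f_r o f_r *)

Definition fr_has_horseshoe (r : R) : Prop :=
  (iter (fr r) 2 2 < iter (fr r) 3 2 /\ iter (fr r) 3 2 < 2 /\ 2 < fr r 2) /\
  exists a0 b0 a1 b1, (iter (fr r) 2 2 <= a0 /\ b1 <= fr r 2) /\
    horseshoe (iter (fr r) 2) (11 / 10) a0 b0 a1 b1.

Definition twice_expands (rl rh lam : Q) (I : Q * Q) : bool :=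
  Qle_bool 0 (fst I) && Qle_bool lam (fr_slope_lb rl I * fr_slope_lb rl (fr_enclosure rl rh I)).

Lemma twice_expands_sound rl rh lam I r x :
  twice_expands rl rh lam I = true -> Q2R rl <= r <= Q2R rh -> encloses I x ->
  Q2R lam <= Rabs (dfr r (fr r x) * dfr r x).
Proof.
  unfold twice_expands. intros H Hr Hx. apply andb_prop in H as [H0 H1].
  apply Qle_bool_R in H0, H1. rewrite RMicromega.Q2R_0 in H0. rewrite Q2R_mult in H1.
  pose proof (fr_slope_lb_sound rl I r x H0 ltac:(lra) Hx) as [S0 S1].
  pose proof (fr_slope_lb_sound rl (fr_enclosure rl rh I) r (fr r x)
    (fr_enclosure_nonneg rl rh I) ltac:(lra) (fr_enclosure_sound rl rh I r x H0 Hr Hx)) as [T0 T1].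
  rewrite Rabs_mult. eapply Rle_trans; [exact H1|].
  rewrite Rmult_comm. apply Rmult_le_compat; lra.
Qed.

Fixpoint subdivision_check (P : Q * Q -> bool) (x h : Q) (n : nat) (b : Q) : bool :=
  match n with
  | O => P (x, b)
  | S n => P (x, x + h)%Q && subdivision_check P (x + h) h n b
  end.

Lemma subdivision_check_sound (P : Q * Q -> bool) (Pc : R -> Prop) :
  (forall I c, P I = true -> encloses I c -> Pc c) ->
  forall n x h b, subdivision_check P x h n b = true ->
  forall c, Q2R x <= c <= Q2R b -> Pc c.
Proof.
  intros HP n. induction n as [|n IH]; intros x h b H c Hc; simpl in H.
  - now apply (HP (x, b)).
  - apply andb_prop in H as [H1 H2].
    destruct (Rle_dec c (Q2R (x + h))).
    + apply (HP (x, x + h)%Q); auto. unfold encloses; simpl; lra.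
    + apply (IH (x + h)%Q h b); auto. lra.
Qed.

Definition expansion_check (rl rh a b : Q) : bool :=
  subdivision_check (twice_expands rl rh (11 # 10)) a ((b - a) / 10)%Q 9 b.

Lemma expansion_check_sound rl rh a b r :
  expansion_check rl rh a b = true -> Q2R rl <= r <= Q2R rh ->
  expands_on (iter (fr r) 2) (11 / 10) (Q2R a) (Q2R b).
Proof.
  intros H Hr. apply (expands_on_of_derivative _ (fun c => dfr r (fr r c) * dfr r c)).
  - intros c _. apply (derivable_pt_lim_comp (fr r) (fr r)); apply fr_derivable.
  - replace (11 / 10) with (Q2R (11 # 10)) by (unfold Q2R; simpl; field).
    apply (subdivision_check_sound _ _ (fun I c HI Hc => twice_expands_sound rl rh _ I r c HI Hr Hc)
      9 a _ b H).
Qed.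

Definition twice_enclosure (rl rh x : Q) : Q * Q := fr_enclosure rl rh (fr_enclosure rl rh (x, x)).

Lemma twice_enclosure_sound rl rh x r : 0 <= Q2R x -> Q2R rl <= r <= Q2R rh ->
  encloses (twice_enclosure rl rh x) (iter (fr r) 2 (Q2R x)).
Proof.
  intros H0 Hr. apply fr_enclosure_sound; auto using fr_enclosure_nonneg.
  apply fr_enclosure_sound; auto. unfold encloses; simpl; lra.
Qed.

Lemma fr_gt_self rl I r x : 1 < Q2R (fst I * exp_lb (rl - snd I)) ->
  Q2R rl <= r -> encloses I x -> x < fr r x.
Proof.
  destruct I as [lo hi]. unfold encloses; simpl. intros H Hr Hx.
  rewrite Q2R_mult in H. pose proof (exp_lb_sound (rl - hi)) as [E0 E1]. rewrite Q2R_minus in E1.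
  assert (E2 : exp (Q2R rl - Q2R hi) <= exp (r - x)).
  { destruct (Req_dec (Q2R rl - Q2R hi) (r - x)) as [->|]; [lra|]. left; apply exp_increasing; lra. }
  assert (Hlo : 0 < Q2R lo) by (destruct (Rle_dec (Q2R lo) 0); nra).
  assert (1 < x * exp (r - x)) by nra.
  unfold fr. replace (x ^ 2 * exp (r - x)) with (x * (x * exp (r - x))) by ring. nra.
Qed.

(* Besides the horseshoe, the check certifies [f_r^2(2) < f_r^3(2) < 2 < f_r(2)], the first
   inequality through [x e^(r-x) > 1] on the enclosure of [f_r^2(2)]. *)
Definition horseshoe_check (rl rh a0 b0 a1 b1 : Q) : bool :=
  (Qltb 2 (fst (fr_enclosure rl rh (2, 2))) && Qle_bool b1 (fst (fr_enclosure rl rh (2, 2))) &&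
  Qle_bool (snd (twice_enclosure rl rh 2)) a0 &&
  Qltb 1 (fst (twice_enclosure rl rh 2) * exp_lb (rl - snd (twice_enclosure rl rh 2))) &&
  Qltb (snd (fr_enclosure rl rh (twice_enclosure rl rh 2))) 2 &&
  Qltb a0 b0 && Qltb b0 a1 && Qltb a1 b1 &&
  Qle_bool (snd (twice_enclosure rl rh a0)) a0 && Qle_bool b1 (fst (twice_enclosure rl rh b0)) &&
  Qle_bool b1 (fst (twice_enclosure rl rh a1)) && Qle_bool (snd (twice_enclosure rl rh b1)) a0 &&
  expansion_check rl rh a0 b0 && expansion_check rl rh a1 b1)%Q.

Lemma horseshoe_check_sound rl rh a0 b0 a1 b1 r :
  horseshoe_check rl rh a0 b0 a1 b1 = true -> Q2R rl <= r <= Q2R rh -> fr_has_horseshoe r.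
Proof.
  unfold horseshoe_check. intros H Hr.
  repeat match goal with K : (_ && _) = true |- _ => apply andb_prop in K as [K ?] end.
  repeat match goal with
  | K : Qltb _ _ = true |- _ => apply Qltb_R in K
  | K : Qle_bool _ _ = true |- _ => apply Qle_bool_R in K
  end.
  rewrite ?RMicromega.Q2R_1, ?Q2R_2 in *.
  assert (O1 : encloses (fr_enclosure rl rh (2, 2)%Q) (fr r 2)).
  { apply fr_enclosure_sound; [simpl; rewrite Q2R_2; lra|exact Hr|].
    unfold encloses; simpl; rewrite Q2R_2; lra. }
  pose proof (twice_enclosure_sound rl rh 2 r ltac:(rewrite Q2R_2; lra) Hr) as O2.
  rewrite Q2R_2 in O2.
  assert (O3 : encloses (fr_enclosure rl rh (twice_enclosure rl rh 2)) (iter (fr r) 3 2))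
    by (apply fr_enclosure_sound; [apply fr_enclosure_nonneg|exact Hr|exact O2]).
  assert (Hgt : iter (fr r) 2 2 < iter (fr r) 3 2)
    by (apply (fr_gt_self rl (twice_enclosure rl rh 2)); [assumption|lra|exact O2]).
  assert (Hnn : 0 <= Q2R (fst (twice_enclosure rl rh 2))) by apply fr_enclosure_nonneg.
  unfold encloses in *.
  assert (Ha0 : 0 <= Q2R a0) by lra.
  pose proof (twice_enclosure_sound rl rh a0 r Ha0 Hr) as G0.
  pose proof (twice_enclosure_sound rl rh b0 r ltac:(lra) Hr) as G1.
  pose proof (twice_enclosure_sound rl rh a1 r ltac:(lra) Hr) as G2.
  pose proof (twice_enclosure_sound rl rh b1 r ltac:(lra) Hr) as G3.
  unfold encloses in G0, G1, G2, G3.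
  assert (Hc : continuity (iter (fr r) 2)) by (apply continuity_iter, continuity_fr).
  split; [lra|].
  exists (Q2R a0), (Q2R b0), (Q2R a1), (Q2R b1). split; [split; lra|].
  repeat split; try lra.
  - apply covers_of_ends; [exact Hc|lra|left; split; lra].
  - apply covers_of_ends; [exact Hc|lra|right; split; lra].
  - now apply (expansion_check_sound rl rh).
  - now apply (expansion_check_sound rl rh).
Qed.

(* The five ranges of r and the intervals I0, I1 were found by a numerical search. *)
Lemma fr_has_horseshoe_on_range r : 26 / 10 <= r <= 29 / 10 -> fr_has_horseshoe r.
Proof.
  intros Hr.
  assert (Piece : forall rl rh a0 b0 a1 b1, horseshoe_check rl rh a0 b0 a1 b1 = true ->
    Q2R rl <= r <= Q2R rh -> fr_has_horseshoe r) by eauto using horseshoe_check_sound.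
  destruct (Rle_dec r (521 / 200)).
  { apply (Piece (13 # 5) (521 # 200) (19 # 5) (19 # 4) (57 # 10) (133 # 20));
      [now vm_compute|unfold Q2R; simpl; lra]. }
  destruct (Rle_dec r (131 / 50)).
  { apply (Piece (521 # 200) (131 # 50) (77 # 20) (24 # 5) (57 # 10) (67 # 10));
      [now vm_compute|unfold Q2R; simpl; lra]. }
  destruct (Rle_dec r (267 / 100)).
  { apply (Piece (131 # 50) (267 # 100) (73 # 20) (49 # 10) (57 # 10) (137 # 20));
      [now vm_compute|unfold Q2R; simpl; lra]. }
  destruct (Rle_dec r (277 / 100)).
  { apply (Piece (267 # 100) (277 # 100) (19 # 5) (5 # 1) (29 # 5) (141 # 20));
      [now vm_compute|unfold Q2R; simpl; lra]. }
  apply (Piece (277 # 100) (29 # 10) (79 # 20) (51 # 10) (61 # 10) (147 # 20));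
    [now vm_compute|unfold Q2R; simpl; lra].
Qed.

Theorem proposition4p16 :
  forall r : R, 26/10 <= r <= 29/10 ->
    let X := fun x => iter (fr r) 2 2 <= x <= fr r 2 in
    (iter (fr r) 2 2 < iter (fr r) 3 2 /\ iter (fr r) 3 2 < 2 /\ 2 < fr r 2) /\
    (forall x, X x -> X (fr r x)) /\
    LY_chaotic (fr r) X /\ BC_chaotic (fr r) X /\ D_chaotic (fr r) X.
Proof.
  intros r Hr X.
  destruct (fr_has_horseshoe_on_range r Hr) as [Horbit [a0 [b0 [a1 [b1 [[HA HB] Hhs]]]]]].
  assert (Hinv : forall x, X x -> X (fr r x))
    by (apply fr_orbit_interval_invariant; tauto).
  split; [exact Horbit|]. split; [exact Hinv|].
  exact (horseshoe_chaotic (fr r) 2 _ _ _ _ _ _ _ (continuity_fr r) ltac:(lia) Hhs HA HB Hinv).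
Qed.
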